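(* Let $(E,P,\vartheta)$ be a complete bipolar metric space and let $F\colon E\cup P\to E\cup P$ with $F(E)\subseteq E$, $F(P)\subseteq P$ be a polynomial contraction, i.e. there exist $\pi\in(0,1)$, an integer $\sigma\geq1$ and functions $q_\upsilon\colon E\times P\to[0,\infty)$, $\upsilon=0,\dots,\sigma$, such that $$\sum_{\upsilon=0}^{\sigma} q_\upsilon(Fe,Ff)\,\vartheta^\upsilon(Fe,Ff)\leq \pi\sum_{\upsilon=0}^{\sigma} q_\upsilon(e,f)\,\vartheta^\upsilon(e,f)\quad\text{for all } e\in E,\ f\in P.$$ Assume (i) $q_0\equiv 0$; (ii) for every $\upsilon\in\{1,\dots,\sigma\}$ there is $W_\upsilon>0$ with $q_\upsilon(e,f)\leq W_\upsilon$ for all $e\in E$, $f\in P$; (iii) there exist $\varrho\in\{1,\dots,\sigma\}$ and $Q_\varrho>0$ with $q_\varrho(e,f)\geq Q_\varrho$ for all $e\in E$, $f\in P$. Then $F$ has a unique fixed point.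
   Context: A bipolar metric space is a triple $(E,P,\vartheta)$ where $E,P$ are nonempty sets and $\vartheta\colon E\times P\to[0,\infty)$ satisfies: (1) for $e\in E$, $f\in P$, $\vartheta(e,f)=0$ iff $e=f$; (2) $\vartheta(e,f)=\vartheta(f,e)$ whenever $e,f\in E\cap P$; (3) $\vartheta(e,f)\leq\vartheta(e,z)+\vartheta(r,z)+\vartheta(r,f)$ for all $e,r\in E$, $z,f\in P$. A sequence $(x_n)$ in $E$ converges to $y\in P$ if $\vartheta(x_n,y)\to0$; a sequence $(y_n)$ in $P$ converges to $x\in E$ if $\vartheta(x,y_n)\to0$. A bisequence $(x_n,y_n)$ with $x_n\in E$, $y_n\in P$ is Cauchy if for every $\varepsilon>0$ there is $N$ with $\vartheta(x_n,y_m)<\varepsilon$ for all $n,m\geq N$; the space is complete if every Cauchy bisequence is convergent (both component sequences converge). $\vartheta^\upsilon$ denotes the $\upsilon$-th power of $\vartheta$, with $\vartheta^0\equiv1$. A fixed point of $F$ is a point $g$ with $Fg=g$. *)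

From Stdlib Require Export Reals.
Open Scope R_scope.

(* A bipolar metric space (E,P,d): E and P are (possibly overlapping) subsets
   of a common ambient type T; d is only meaningful on E x P. *)
Definition bipolar_metric {T : Type} (E P : T -> Prop) (d : T -> T -> R) : Prop :=
  (exists e, E e) /\ (exists f, P f) /\
  (forall e f, E e -> P f -> 0 <= d e f) /\
  (forall e f, E e -> P f -> (d e f = 0 <-> e = f)) /\
  (forall e f, E e -> P e -> E f -> P f -> d e f = d f e) /\
  (forall e r z f, E e -> E r -> P z -> P f ->
     d e f <= d e z + d r z + d r f).

Definition cvg_left {T : Type} (P : T -> Prop) (d : T -> T -> R)
  (x : nat -> T) (y : T) : Prop :=
  P y /\ forall eps, 0 < eps -> exists N, forall n, (N <= n)%nat -> d (x n) y < eps.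

Definition cvg_right {T : Type} (E : T -> Prop) (d : T -> T -> R)
  (y : nat -> T) (x : T) : Prop :=
  E x /\ forall eps, 0 < eps -> exists N, forall n, (N <= n)%nat -> d x (y n) < eps.

Definition cauchy_bisequence {T : Type} (d : T -> T -> R) (x y : nat -> T) : Prop :=
  forall eps, 0 < eps -> exists N, forall n m, (N <= n)%nat -> (N <= m)%nat ->
    d (x n) (y m) < eps.

Definition bp_complete {T : Type} (E P : T -> Prop) (d : T -> T -> R) : Prop :=
  forall x y : nat -> T, (forall n, E (x n)) -> (forall n, P (y n)) ->
    cauchy_bisequence d x y ->
    (exists b, cvg_left P d x b) /\ (exists a, cvg_right E d y a).

From Stdlib Require Import Reals Lra Lia.
Open Scope R_scope.

(* Write Phi(e,f) = sum_v q_v(e,f) d(e,f)^v ([poly_form]).  The lower bound on q_rho gives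
   Q d^rho <= Phi, and q_0 = 0 with bounded q_v gives Phi <= W d when d <= 1.
   Iterating Phi(Fe,Ff) <= pi Phi(e,f) thus yields d(F^k e, F^k f) <= C r^k with
   r = pi^(1/rho), so the iterates from any e in E, f in P form a geometric,
   hence Cauchy, bisequence.  Its common limit is fixed because
   d(Fe,Ff)^rho <= (pi W / Q) d(e,f) makes F continuous, and fixed points
   e in E, f in P satisfy Phi(e,f) <= pi Phi(e,f), forcing d(e,f) = 0. *)

Lemma pow_lt_compat_l (x y : R) (n : nat) :
  0 <= x < y -> (0 < n)%nat -> x ^ n < y ^ n.
Proof.
  intros Hxy Hn; destruct n as [|n]; [lia|]; simpl.
  assert (x ^ n <= y ^ n) by (apply pow_incr; lra).
  assert (0 <= x ^ n) by (apply pow_le; lra).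
  assert (0 < y ^ n) by (apply pow_lt; lra).
  nra.
Qed.

Lemma pow_le_reg_l (x y : R) (n : nat) :
  0 <= y -> (0 < n)%nat -> x ^ n <= y ^ n -> x <= y.
Proof.
  intros Hy Hn Hpow; destruct (Rle_or_lt x y) as [|Hyx]; [assumption|].
  pose proof (pow_lt_compat_l y x n (conj Hy Hyx) Hn); lra.
Qed.

Lemma exists_pow_root (p : R) (n : nat) :
  0 < p < 1 -> (0 < n)%nat -> exists r, 0 < r < 1 /\ r ^ n = p.
Proof.
  intros Hp Hn.
  set (r := Rpower p (/ INR n)).
  assert (Hr : 0 < r) by apply exp_pos.
  assert (Hroot : r ^ n = p).
  { assert (INR n <> 0) by (apply not_0_INR; lia).
    rewrite <- (Rpower_pow n r Hr); unfold r; rewrite Rpower_mult, Rinv_l by assumption.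
    apply Rpower_1; lra. }
  exists r; repeat split; [exact Hr| |exact Hroot].
  destruct (Rlt_or_le r 1) as [|Hr1]; [assumption|].
  pose proof (pow_incr 1 r n (conj Rle_0_1 Hr1)); rewrite pow1 in *; lra.
Qed.

Lemma sum_f_R0_ge_term (g : nat -> R) (n k : nat) :
  (forall i, (i <= n)%nat -> 0 <= g i) -> (k <= n)%nat -> g k <= sum_f_R0 g n.
Proof.
  revert k; induction n as [|n IH]; intros k Hg Hk; simpl.
  - replace k with 0%nat by lia; lra.
  - assert (Hg' : forall i, (i <= n)%nat -> 0 <= g i) by (intros; apply Hg; lia).
    assert (0 <= g (S n)) by (apply Hg; lia).
    destruct (Nat.eq_dec k (S n)) as [->|Hne].
    + pose proof (IH 0%nat Hg' (Nat.le_0_l n)); pose proof (Hg' 0%nat (Nat.le_0_l n)); lra.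
    + pose proof (IH k Hg' ltac:(lia)); lra.
Qed.

Section BipolarSequences.

Variables (T : Type) (E P : T -> Prop) (d : T -> T -> R).

Hypothesis dist_nonneg : forall e f, E e -> P f -> 0 <= d e f.
Hypothesis dist_eq0 : forall e f, E e -> P f -> (d e f = 0 <-> e = f).
Hypothesis dist_triangle : forall e r z f, E e -> E r -> P z -> P f ->
  d e f <= d e z + d r z + d r f.

Variables (x y : nat -> T).
Hypothesis x_in_E : forall n, E (x n).
Hypothesis y_in_P : forall n, P (y n).

Lemma cauchy_limits_eq (a b : T) :
  cauchy_bisequence d x y -> cvg_left P d x b -> cvg_right E d y a -> a = b.
Proof.
  intros Hcauchy [Hb Hxb] [Ha Hya].
  apply dist_eq0; [exact Ha|exact Hb|].
  pose proof (dist_nonneg a b Ha Hb).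
  destruct (Rle_lt_or_eq_dec 0 (d a b)) as [Hpos|]; [assumption| |easy].
  exfalso.
  destruct (Hxb (d a b / 3) ltac:(lra)) as [N1 H1].
  destruct (Hya (d a b / 3) ltac:(lra)) as [N2 H2].
  destruct (Hcauchy (d a b / 3) ltac:(lra)) as [N3 H3].
  set (n := (N1 + N2 + N3)%nat).
  specialize (H1 n ltac:(lia)); specialize (H2 n ltac:(lia)).
  specialize (H3 n n ltac:(lia) ltac:(lia)).
  pose proof (dist_triangle a (x n) (y n) b Ha (x_in_E n) (y_in_P n) Hb).
  lra.
Qed.

Section Geometric.

Variables K r : R.
Hypothesis r_range : 0 <= r < 1.
Hypothesis dist_diag_le : forall n, d (x n) (y n) <= K * r ^ n.
Hypothesis dist_subdiag_le : forall n, d (x (S n)) (y n) <= K * r ^ n.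

Let M := 3 * K / (1 - r).

Let M_scale : M * (1 - r) = 3 * K.
Proof. unfold M; field; lra. Qed.

Let K_nonneg : 0 <= K.
Proof. pose proof (dist_diag_le 0); pose proof (dist_nonneg _ _ (x_in_E 0) (y_in_P 0)); simpl in *; lra. Qed.

Let K_le_M : K <= M.
Proof. pose proof M_scale; pose proof K_nonneg; nra. Qed.

Let M_step_above : 2 * K + M * r <= M.
Proof. pose proof M_scale; pose proof K_nonneg; nra. Qed.

Let M_step_below : K + K * r + M * r <= M.
Proof. pose proof M_scale; pose proof K_nonneg; nra. Qed.

Lemma dist_le_geometric_above (j n : nat) : d (x n) (y (n + j)) <= M * r ^ n.
Proof.
  revert n; induction j as [|j IH]; intros n.
  - rewrite Nat.add_0_r; pose proof (dist_diag_le n); pose proof K_le_M.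
    assert (0 <= r ^ n) by (apply pow_le; lra). nra.
  - rewrite Nat.add_succ_r, <- Nat.add_succ_l.
    pose proof (dist_triangle _ _ _ _ (x_in_E n) (x_in_E (S n)) (y_in_P n) (y_in_P (S n + j))).
    pose proof (IH (S n)); pose proof (dist_diag_le n); pose proof (dist_subdiag_le n).
    pose proof M_step_above.
    assert (0 <= r ^ n) by (apply pow_le; lra).
    simpl in *; nra.
Qed.

Lemma dist_le_geometric_below (j m : nat) : d (x (m + j)) (y m) <= M * r ^ m.
Proof.
  revert m; induction j as [|j IH]; intros m.
  - rewrite Nat.add_0_r; pose proof (dist_diag_le m); pose proof K_le_M.
    assert (0 <= r ^ m) by (apply pow_le; lra). nra.
  - rewrite Nat.add_succ_r, <- Nat.add_succ_l.
    pose proof (dist_triangle _ _ _ _ (x_in_E (S m + j)) (x_in_E (S m)) (y_in_P (S m)) (y_in_P m)).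
    pose proof (IH (S m)); pose proof (dist_diag_le (S m)); pose proof (dist_subdiag_le m).
    pose proof M_step_below.
    assert (0 <= r ^ m) by (apply pow_le; lra).
    simpl in *; nra.
Qed.

Lemma cauchy_bisequence_of_geometric : cauchy_bisequence d x y.
Proof.
  assert (Hbound : forall n m, d (x n) (y m) <= M * r ^ Nat.min n m).
  { intros n m; destruct (Nat.le_ge_cases n m) as [Hnm|Hmn].
    - rewrite Nat.min_l, <- (Nat.sub_add n m), Nat.add_comm by lia.
      apply dist_le_geometric_above.
    - rewrite Nat.min_r, <- (Nat.sub_add m n), Nat.add_comm by lia.
      apply dist_le_geometric_below. }
  intros eps Heps.
  assert (HM : 0 <= M) by (unfold M; apply Rmult_le_pos, Rlt_le, Rinv_0_lt_compat; lra).
  destruct (pow_lt_1_zero r ltac:(rewrite Rabs_right; lra) (eps / (M + 1)))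
    as [N HN]; [apply Rdiv_lt_0_compat; lra|].
  exists N; intros n m Hn Hm.
  specialize (HN (Nat.min n m) ltac:(lia)).
  rewrite Rabs_right in HN by (apply Rle_ge, pow_le; lra).
  pose proof (Hbound n m).
  assert (0 <= r ^ Nat.min n m) by (apply pow_le; lra).
  assert ((M + 1) * (eps / (M + 1)) = eps) by (field; lra).
  nra.
Qed.

End Geometric.

End BipolarSequences.

Lemma cauchy_bisequence_succ {T : Type} (d : T -> T -> R) (x y : nat -> T) :
  cauchy_bisequence d x y ->
  cauchy_bisequence d (fun n => x (S n)) (fun n => y (S n)).
Proof.
  intros Hcauchy eps Heps; destruct (Hcauchy eps Heps) as [N HN].
  exists N; intros n m Hn Hm; apply HN; lia.
Qed.

Lemma cvg_right_succ {T : Type} (E : T -> Prop) (d : T -> T -> R) (y : nat -> T) (a : T) :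
  cvg_right E d y a -> cvg_right E d (fun n => y (S n)) a.
Proof.
  intros [Ha Hya]; split; [exact Ha|].
  intros eps Heps; destruct (Hya eps Heps) as [N HN].
  exists N; intros n Hn; apply HN; lia.
Qed.

Section PolynomialContraction.

Variables (T : Type) (E P : T -> Prop) (d : T -> T -> R).
Variables (q : nat -> T -> T -> R) (sigma : nat).

Hypothesis dist_nonneg : forall e f, E e -> P f -> 0 <= d e f.
Hypothesis dist_eq0 : forall e f, E e -> P f -> (d e f = 0 <-> e = f).
Hypothesis dist_triangle : forall e r z f, E e -> E r -> P z -> P f ->
  d e f <= d e z + d r z + d r f.
Hypothesis coef_nonneg : forall v e f, (v <= sigma)%nat -> E e -> P f -> 0 <= q v e f.
Hypothesis coef0_eq0 : forall e f, E e -> P f -> q 0%nat e f = 0.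
Hypothesis coef_bounded : forall v, (1 <= v <= sigma)%nat ->
  exists W, 0 < W /\ forall e f, E e -> P f -> q v e f <= W.

Variables (rho : nat) (Q : R).
Hypothesis rho_range : (1 <= rho <= sigma)%nat.
Hypothesis Q_pos : 0 < Q.
Hypothesis coef_rho_ge : forall e f, E e -> P f -> Q <= q rho e f.

Definition poly_form (e f : T) : R := sum_f_R0 (fun v => q v e f * d e f ^ v) sigma.

Lemma poly_form_ge (e f : T) : E e -> P f -> Q * d e f ^ rho <= poly_form e f.
Proof.
  intros He Hf.
  assert (Hterm : forall v, (v <= sigma)%nat -> 0 <= q v e f * d e f ^ v).
  { intros v Hv; apply Rmult_le_pos; [apply coef_nonneg; auto|apply pow_le; auto]. }
  apply Rle_trans with (q rho e f * d e f ^ rho).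
  - apply Rmult_le_compat_r; [apply pow_le; auto|auto].
  - apply (sum_f_R0_ge_term (fun v => q v e f * d e f ^ v)); [exact Hterm|lia].
Qed.

Lemma poly_form_nonneg (e f : T) : E e -> P f -> 0 <= poly_form e f.
Proof.
  intros He Hf; pose proof (poly_form_ge e f He Hf).
  assert (0 <= d e f ^ rho) by (apply pow_le; auto).
  nra.
Qed.

Lemma coef_uniformly_bounded :
  exists W, 0 <= W /\ forall v e f, (1 <= v <= sigma)%nat -> E e -> P f -> q v e f <= W.
Proof.
  assert (Hn : forall n, (n <= sigma)%nat -> exists W, 0 <= W /\
            forall v e f, (1 <= v <= n)%nat -> E e -> P f -> q v e f <= W).
  { induction n as [|n IH]; intros Hn.
    - exists 0; split; [lra|]; intros; lia.
    - destruct IH as [W1 [HW1 H1]]; [lia|].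
      destruct (coef_bounded (S n)) as [W2 [HW2 H2]]; [lia|].
      exists (Rmax W1 W2); split; [apply Rle_trans with W1; [lra|apply Rmax_l]|].
      intros v e f Hv He Hf; destruct (Nat.eq_dec v (S n)) as [->|Hne].
      + apply Rle_trans with W2; [auto|apply Rmax_r].
      + apply Rle_trans with W1; [apply H1; auto; lia|apply Rmax_l]. }
  exact (Hn sigma (le_n sigma)).
Qed.

Lemma poly_form_le_dist :
  exists W, 0 <= W /\ forall e f, E e -> P f -> d e f <= 1 -> poly_form e f <= W * d e f.
Proof.
  destruct coef_uniformly_bounded as [W [HW Hq]].
  exists (W * INR (S sigma)); split; [apply Rmult_le_pos; [exact HW|apply pos_INR]|].
  intros e f He Hf Hd1; pose proof (dist_nonneg e f He Hf).
  unfold poly_form; rewrite Rmult_assoc, (Rmult_comm (INR _)), <- Rmult_assoc, <- sum_cte.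
  apply sum_Rle; intros [|v] Hv.
  - rewrite coef0_eq0 by assumption; nra.
  - pose proof (Hq (S v) e f ltac:(lia) He Hf); pose proof (coef_nonneg (S v) e f Hv He Hf).
    pose proof (pow_incr (d e f) 1 v ltac:(lra)); rewrite pow1 in *.
    assert (0 <= d e f ^ v) by (apply pow_le; lra).
    assert (q (S v) e f * d e f ^ v <= W) by nra.
    simpl; nra.
Qed.

Variables (F : T -> T) (pi : R).
Hypothesis F_maps_E : forall e, E e -> E (F e).
Hypothesis F_maps_P : forall f, P f -> P (F f).
Hypothesis pi_range : 0 < pi < 1.
Hypothesis poly_form_contract : forall e f, E e -> P f ->
  poly_form (F e) (F f) <= pi * poly_form e f.

Lemma iter_maps_E (k : nat) (e : T) : E e -> E (Nat.iter k F e).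
Proof. intros He; induction k as [|k IH]; simpl; auto. Qed.

Lemma iter_maps_P (k : nat) (f : T) : P f -> P (Nat.iter k F f).
Proof. intros Hf; induction k as [|k IH]; simpl; auto. Qed.

Lemma poly_form_iter (k : nat) (e f : T) : E e -> P f ->
  poly_form (Nat.iter k F e) (Nat.iter k F f) <= pi ^ k * poly_form e f.
Proof.
  intros He Hf; induction k as [|k IH]; simpl; [lra|].
  pose proof (poly_form_contract _ _ (iter_maps_E k e He) (iter_maps_P k f Hf)).
  nra.
Qed.

Lemma dist_iter_le_geometric (r : R) (e f : T) : 0 < r -> r ^ rho = pi -> E e -> P f ->
  exists C, forall k, d (Nat.iter k F e) (Nat.iter k F f) <= C * r ^ k.
Proof.
  intros Hr Hroot He Hf.
  set (C := Rmax 1 (poly_form e f / Q)).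
  assert (HC1 : 1 <= C) by apply Rmax_l.
  assert (HCQ : poly_form e f <= C * Q).
  { assert (poly_form e f / Q <= C) by apply Rmax_r.
    assert (poly_form e f / Q * Q = poly_form e f) by (field; lra).
    nra. }
  assert (HCrho : C <= C ^ rho).
  { rewrite <- (pow_1 C) at 1; apply Rle_pow; [exact HC1|lia]. }
  exists C; intros k.
  assert (Hrk : 0 < (r ^ k) ^ rho) by (apply pow_lt, pow_lt; exact Hr).
  assert (Hpi : pi ^ k = (r ^ k) ^ rho).
  { rewrite <- Hroot, <- !pow_mult, Nat.mul_comm; reflexivity. }
  assert (Hdecay : Q * d (Nat.iter k F e) (Nat.iter k F f) ^ rho <= (r ^ k) ^ rho * poly_form e f).
  { rewrite <- Hpi; eapply Rle_trans.
    - exact (poly_form_ge _ _ (iter_maps_E k e He) (iter_maps_P k f Hf)).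
    - exact (poly_form_iter k e f He Hf). }
  apply (pow_le_reg_l _ _ rho); [apply Rmult_le_pos; [lra|apply pow_le; lra]|lia|].
  rewrite Rpow_mult_distr.
  apply Rmult_le_reg_l with Q; [exact Q_pos|].
  pose proof (poly_form_nonneg e f He Hf).
  assert (C * Q <= C ^ rho * Q) by nra.
  nra.
Qed.

Lemma iterates_cauchy (e f : T) : E e -> P f ->
  cauchy_bisequence d (fun n => Nat.iter n F e) (fun n => Nat.iter n F f).
Proof.
  intros He Hf.
  destruct (exists_pow_root pi rho pi_range ltac:(lia)) as [r [Hr Hroot]].
  destruct (dist_iter_le_geometric r e f ltac:(lra) Hroot He Hf) as [C1 HC1].
  destruct (dist_iter_le_geometric r (F e) f ltac:(lra) Hroot (F_maps_E e He) Hf) as [C2 HC2].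
  assert (Hmax : forall C k, C <= Rmax C1 C2 -> C * r ^ k <= Rmax C1 C2 * r ^ k).
  { intros C k HC; apply Rmult_le_compat_r; [apply pow_le; lra|exact HC]. }
  apply (cauchy_bisequence_of_geometric T E P d dist_nonneg dist_triangle _ _
           (fun n => iter_maps_E n e He) (fun n => iter_maps_P n f Hf) (Rmax C1 C2) r);
    [lra| |].
  - intros n; eapply Rle_trans; [apply HC1|apply Hmax, Rmax_l].
  - intros n; cbv beta; rewrite Nat.iter_succ_r.
    eapply Rle_trans; [apply HC2|apply Hmax, Rmax_r].
Qed.

Lemma dist_map_pow_le :
  exists L, 0 <= L /\ forall e f, E e -> P f -> d e f <= 1 ->
    d (F e) (F f) ^ rho <= L * d e f.
Proof.
  destruct poly_form_le_dist as [W [HW HPhi]].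
  exists (pi * W / Q); split.
  { apply Rmult_le_pos; [apply Rmult_le_pos; lra|apply Rlt_le, Rinv_0_lt_compat, Q_pos]. }
  intros e f He Hf Hd1.
  pose proof (poly_form_ge _ _ (F_maps_E e He) (F_maps_P f Hf)).
  pose proof (poly_form_contract e f He Hf).
  pose proof (HPhi e f He Hf Hd1).
  apply Rmult_le_reg_l with Q; [exact Q_pos|].
  replace (Q * (pi * W / Q * d e f)) with (pi * (W * d e f)) by (field; lra).
  nra.
Qed.

Lemma cvg_left_map (x : nat -> T) (a : T) : (forall n, E (x n)) ->
  cvg_left P d x a -> cvg_left P d (fun n => F (x n)) (F a).
Proof.
  intros HxE [Ha Hxa]; split; [auto|].
  destruct dist_map_pow_le as [L [HL HFd]].
  intros eps Heps.
  set (delta := Rmin 1 (eps ^ rho / (L + 1))).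
  assert (Hdelta : 0 < delta).
  { apply Rmin_pos; [lra|apply Rdiv_lt_0_compat; [apply pow_lt|]; lra]. }
  destruct (Hxa delta Hdelta) as [N HN].
  exists N; intros n Hn; specialize (HN n Hn).
  pose proof (dist_nonneg _ _ (HxE n) Ha).
  pose proof (HFd _ _ (HxE n) Ha (Rle_trans _ _ _ (Rlt_le _ _ HN) (Rmin_l _ _))).
  assert (Hsmall : (L + 1) * delta <= eps ^ rho).
  { apply Rle_trans with ((L + 1) * (eps ^ rho / (L + 1))).
    - apply Rmult_le_compat_l; [lra|apply Rmin_r].
    - right; field; lra. }
  destruct (Rlt_or_le (d (F (x n)) (F a)) eps) as [|Hfar]; [assumption|].
  pose proof (pow_incr eps _ rho (conj (Rlt_le _ _ Heps) Hfar)).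
  nra.
Qed.

Lemma iterates_limit_fixed (e f a : T) : E e -> P f ->
  cvg_left P d (fun n => Nat.iter n F e) a -> cvg_right E d (fun n => Nat.iter n F f) a ->
  F a = a.
Proof.
  intros He Hf Hxa Hya.
  symmetry.
  apply (cauchy_limits_eq T E P d dist_nonneg dist_eq0 dist_triangle
           (fun n => Nat.iter (S n) F e) (fun n => Nat.iter (S n) F f)
           (fun n => iter_maps_E (S n) e He) (fun n => iter_maps_P (S n) f Hf)).
  - exact (cauchy_bisequence_succ d _ _ (iterates_cauchy e f He Hf)).
  - exact (cvg_left_map _ a (fun n => iter_maps_E n e He) Hxa).
  - exact (cvg_right_succ E d _ a Hya).
Qed.

Lemma fixed_points_dist_eq0 (e f : T) : E e -> P f -> F e = e -> F f = f -> d e f = 0.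
Proof.
  intros He Hf Hfe Hff.
  pose proof (poly_form_contract e f He Hf) as Hcontr; rewrite Hfe, Hff in Hcontr.
  pose proof (poly_form_nonneg e f He Hf).
  assert (Hzero : poly_form e f <= 0) by nra.
  pose proof (poly_form_ge e f He Hf).
  pose proof (dist_nonneg e f He Hf).
  destruct (Rle_lt_or_eq_dec 0 (d e f)) as [Hpos|]; [assumption| |easy].
  pose proof (pow_lt (d e f) rho Hpos).
  nra.
Qed.

Theorem poly_contraction_unique_fixed_point :
  (exists e, E e) -> (exists f, P f) -> bp_complete E P d ->
  exists g, (E g \/ P g) /\ F g = g /\ forall h, (E h \/ P h) -> F h = h -> h = g.
Proof.
  intros [e He] [f Hf] Hcomplete.
  pose proof (fun n => iter_maps_E n e He) as HxE.
  pose proof (fun n => iter_maps_P n f Hf) as HyP.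
  destruct (Hcomplete _ _ HxE HyP (iterates_cauchy e f He Hf)) as [[b Hxb] [a Hya]].
  assert (a = b) as <- by exact (cauchy_limits_eq T E P d dist_nonneg dist_eq0
    dist_triangle _ _ HxE HyP a b (iterates_cauchy e f He Hf) Hxb Hya).
  pose proof (iterates_limit_fixed e f a He Hf Hxb Hya) as Hfix.
  destruct Hya as [Ha _]; destruct Hxb as [Ha' _].
  exists a; split; [left; exact Ha|split; [exact Hfix|]].
  intros h [Hh|Hh] Hfixh.
  - apply dist_eq0; [exact Hh|exact Ha'|].
    exact (fixed_points_dist_eq0 h a Hh Ha' Hfixh Hfix).
  - symmetry; apply dist_eq0; [exact Ha|exact Hh|].
    exact (fixed_points_dist_eq0 a h Ha Hh Hfix Hfixh).
Qed.

End PolynomialContraction.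

Theorem corollary3p5 (T : Type) (E P : T -> Prop) (d : T -> T -> R)
  (F : T -> T) (pi : R) (sigma : nat) (q : nat -> T -> T -> R) :
  bipolar_metric E P d ->
  bp_complete E P d ->
  (forall e, E e -> E (F e)) ->
  (forall f, P f -> P (F f)) ->
  0 < pi < 1 ->
  (1 <= sigma)%nat ->
  (forall v e f, (v <= sigma)%nat -> E e -> P f -> 0 <= q v e f) ->
  (forall e f, E e -> P f ->
     sum_f_R0 (fun v => q v (F e) (F f) * d (F e) (F f) ^ v) sigma
     <= pi * sum_f_R0 (fun v => q v e f * d e f ^ v) sigma) ->
  (forall e f, E e -> P f -> q 0%nat e f = 0) ->
  (forall v, (1 <= v <= sigma)%nat ->
     exists W, 0 < W /\ forall e f, E e -> P f -> q v e f <= W) ->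
  (exists rho Q, (1 <= rho <= sigma)%nat /\ 0 < Q /\
     forall e f, E e -> P f -> Q <= q rho e f) ->
  exists g, (E g \/ P g) /\ F g = g /\
    forall h, (E h \/ P h) -> F h = h -> h = g.
Proof.
  intros [HE [HP [Hd0 [Hdz [_ Htri]]]]] Hcomplete HFE HFP Hpi _ Hq0 Hcontr Hqz HW
    [rho [Q [Hrho [HQ HQle]]]].
  exact (poly_contraction_unique_fixed_point T E P d q sigma Hd0 Hdz Htri Hq0 Hqz HW
           rho Q Hrho HQ HQle F pi HFE HFP Hpi Hcontr HE HP Hcomplete).
Qed.
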